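(* Let $g:\mathbb{R}^d\to\mathbb{R}$ be convex and let $\mathcal{X}=\{x:g(x)\le0\}$. Assume there is $R>0$ with $\mathcal{X}\subseteq R\mathbb{B}$. Suppose Slater's condition holds: there exist $\xi>0$ and $y\in\mathbb{R}^d$ with $g(y)\le-\xi$. Then for every $c\in(0,1)$, with $\epsilon=c\xi$ and $\sigma=(1-c)\frac{\xi}{2R}$: - the set $\{x\in\mathbb{R}^d:g(x)=-\epsilon\}$ is nonempty, and - $\|s\|\ge\sigma$ for every $x$ with $g(x)=-\epsilon$ and every $s\in\partial g(x)$.
   Context: $\|\cdot\|$ is the Euclidean norm, $\mathbb{B}=\{x\in\mathbb{R}^d:\|x\|\le1\}$, and $\partial g(x)$ is the subdifferential of $g$ at $x$. *)

From HB Require Import structures.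
From mathcomp Require Import all_boot all_order all_algebra.
From mathcomp Require Import reals.
Set Implicit Arguments. Unset Strict Implicit. Unset Printing Implicit Defensive.
Import Order.TTheory GRing.Theory Num.Theory.
Local Open Scope ring_scope.

Definition dotv (R : realType) (d : nat) (u v : 'rV[R]_d) : R :=
  \sum_(i < d) u ord0 i * v ord0 i.
Definition enorm (R : realType) (d : nat) (u : 'rV[R]_d) : R :=
  Num.sqrt (dotv u u).

Definition convex_fun (R : realType) (d : nat) (g : 'rV[R]_d -> R) : Prop :=
  forall (x y : 'rV[R]_d) (t : R), 0 <= t -> t <= 1 ->
    g (t *: x + (1 - t) *: y) <= t * g x + (1 - t) * g y.

Definition subdiff (R : realType) (d : nat) (g : 'rV[R]_d -> R) (x : 'rV[R]_d)
  : 'rV[R]_d -> Prop :=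
  fun s => forall z : 'rV[R]_d, g x + dotv s (z - x) <= g z.

From HB Require Import structures.
From mathcomp Require Import all_boot all_order all_algebra.
From mathcomp Require Import classical_sets reals.
From mathcomp Require Import ring lra.
Import Order.TTheory GRing.Theory Num.Theory.
Local Open Scope ring_scope.

(** Along the segment from the Slater point [y] (where [g <= -xi]) to a point
    outside the ball of radius [Rad] (where [g > 0]), the convex restriction of
    [g] to a line takes the value [-eps] by an intermediate value argument.
    At any [x] on that level set a subgradient [s] satisfies
    [xi - eps <= g x - g y <= <s, x - y> <= |s| (|x| + |y|) <= 2 Rad |s|]. *)

Section ConvexReal.
Context {R : realType}.

Definition convexR (phi : R -> R) : Prop := forall a b t : R, 0 <= t -> t <= 1 ->
  phi (t * a + (1 - t) * b) <= t * phi a + (1 - t) * phi b.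

Lemma convexR_chord {phi : R -> R} {a b c : R} : convexR phi -> a < b -> b < c ->
  (c - a) * phi b <= (c - b) * phi a + (b - a) * phi c.
Proof.
move=> phi_cvx ab bc.
have ca : 0 < c - a by lra.
set t := (c - b) / (c - a).
have t0 : 0 <= t by rewrite /t divr_ge0 //; lra.
have t1 : t <= 1 by rewrite /t ler_pdivrMr //; lra.
have b_comb : b = t * a + (1 - t) * c by rewrite /t; field; lra.
have wa : (c - a) * t = c - b by rewrite /t; field; lra.
have wc : (c - a) * (1 - t) = b - a by rewrite /t; field; lra.
clearbody t.
have := ler_wpM2l (ltW ca) (phi_cvx a c t t0 t1).
by rewrite -b_comb mulrDr !mulrA wa wc.
Qed.

Section IntermediateValue.
Context {phi : R -> R} {v : R}.
Hypotheses (phi_cvx : convexR phi) (phi0 : phi 0 < v) (phi1 : v < phi 1).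

Let E : set R := fun t => 0 <= t <= 1 /\ phi t <= v.
Let T := sup E.

Let E0 : E 0.
Proof. by split; [rewrite lexx ler01 | exact: ltW]. Qed.

Let E_sup : has_sup E.
Proof. by split; [exists 0 | exists 1 => t [/andP[_ ->]]]. Qed.

Let E_le_T t : E t -> t <= T.
Proof. exact: sup_upper_bound. Qed.

Let T_ge0 : 0 <= T.
Proof. exact: E_le_T E0. Qed.

Let T_le1 : T <= 1.
Proof. by apply: ge_sup; [exists 0 | move=> t [/andP[_ ->]]]. Qed.

(* Points of [E] approach [T] from the left, and the chord through [2] bounds
   [phi T] above by a quantity tending to [v]. *)
Let phi_T_le : phi T <= v.
Proof.
rewrite leNgt; apply/negP => vT.
set dl := phi T - v; set M := `|phi 2 - v| + 1.
have M0 : 0 < M by rewrite /M ltr_pwDr // normr_ge0.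
have dl0 : 0 < dl by rewrite /dl; lra.
have [t [/andP[t0 t1] phi_t] Tt] := sup_adherent (divr_gt0 dl0 M0) E_sup.
have tT : t <= T := E_le_T t (conj (introT andP (conj t0 t1)) phi_t).
have [tTe | tTn] := eqVneq t T; first by move: phi_t; rewrite tTe; lra.
have ltT : t < T by rewrite lt_neqAle tTn tT.
have T2 : T < 2 by have := T_le1; lra.
have chord := convexR_chord phi_cvx ltT T2.
have phi2M : phi 2 - v <= M by rewrite /M; have := ler_norm (phi 2 - v); lra.
have TtM : (T - t) * M < dl.
  by rewrite -ltr_pdivlMr //; move: Tt; rewrite -/T; lra.
have : (2 - T) * phi t <= (2 - T) * v by rewrite ler_pM2l //; lra.
have : (T - t) * (phi 2 - v) <= (T - t) * M by rewrite ler_pM2l //; lra.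
have : dl <= (2 - t) * dl by rewrite ler_pMl //; lra.
move: TtM; rewrite /dl; nra.
Qed.

(* If [phi T < v], the chord from [T] to [1] keeps [phi] below [v] slightly to
   the right of [T], contradicting maximality. *)
Let phi_T_ge : v <= phi T.
Proof.
rewrite leNgt; apply/negP => Tv.
have T1 : T < 1.
  rewrite lt_neqAle T_le1 andbT; apply/eqP => T1.
  by move: Tv; rewrite T1 ltNge (ltW phi1).
set dl := v - phi T; set K := phi 1 - phi T.
have dl0 : 0 < dl by rewrite /dl; lra.
have K0 : 0 < K by rewrite /K; have := phi1; lra.
set q := dl / (dl + K).
have q0 : 0 < q by rewrite /q divr_gt0 //; lra.
have q1 : q < 1 by rewrite /q ltr_pdivrMr; lra.
have qK : q * K <= dl by rewrite /q mulrAC ler_pdivrMr; nra.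
set b := T + (1 - T) * q.
have Tb : T < b by rewrite /b; nra.
have b1 : b < 1 by rewrite /b; nra.
have chord := convexR_chord phi_cvx Tb b1.
have : E b.
  split; first by apply/andP; split; have := T_ge0; lra.
  have e1 : 1 - b = (1 - T) * (1 - q) by rewrite /b; ring.
  have e2 : b - T = (1 - T) * q by rewrite /b; ring.
  rewrite e1 e2 in chord.
  have T1p : 0 < 1 - T by lra.
  rewrite -(ler_pM2l T1p).
  have : (1 - T) * (q * K) <= (1 - T) * dl by rewrite ler_pM2l.
  move: chord; rewrite /K /dl; nra.
by move/E_le_T; lra.
Qed.

Lemma convexR_ivt : exists t, phi t = v.
Proof. by exists T; apply/le_anti; rewrite phi_T_le phi_T_ge. Qed.

End IntermediateValue.
End ConvexReal.

Section Euclidean.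
Context {R : realType} {d : nat}.
Implicit Types (u v w : 'rV[R]_d).

Lemma dotvBr u v w : dotv u (v - w) = dotv u v - dotv u w.
Proof. by rewrite /dotv -sumrB; apply: eq_bigr => i _; rewrite !mxE; ring. Qed.

Lemma dotvv_ge0 u : 0 <= dotv u u.
Proof. by apply: sumr_ge0 => i _; rewrite -expr2 sqr_ge0. Qed.

(* Lagrange's identity: the defect in Cauchy--Schwarz is
   [1/2 sum_(i,j) (u_i v_j - u_j v_i)^2]. *)
Lemma dotv_sqr_le u v : dotv u v ^+ 2 <= dotv u u * dotv v v.
Proof.
pose P := \sum_(i < d) \sum_(j < d) u ord0 i ^+ 2 * v ord0 j ^+ 2.
pose Q := \sum_(i < d) \sum_(j < d) u ord0 j ^+ 2 * v ord0 i ^+ 2.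
pose D := \sum_(i < d) \sum_(j < d) u ord0 i * v ord0 i * (u ord0 j * v ord0 j).
have uuvv : dotv u u * dotv v v = P.
  rewrite /dotv mulr_suml; apply: eq_bigr => i _; rewrite mulr_sumr.
  by apply: eq_bigr => j _; ring.
have uv2 : dotv u v ^+ 2 = D.
  rewrite /dotv expr2 mulr_suml; apply: eq_bigr => i _; rewrite mulr_sumr.
  by apply: eq_bigr => j _; ring.
have QP : Q = P by rewrite /Q exchange_big.
have lagrange : \sum_(i < d) \sum_(j < d) (u ord0 i * v ord0 j - u ord0 j * v ord0 i) ^+ 2
    = P + Q - 2 * D.
  rewrite /P /Q /D -big_split mulr_sumr -sumrB; apply: eq_bigr => i _.
  rewrite -big_split mulr_sumr -sumrB; apply: eq_bigr => j _ /=; ring.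
have : 0 <= P + Q - 2 * D.
  by rewrite -lagrange; do 2!apply: sumr_ge0 => ? _; exact: sqr_ge0.
by rewrite uuvv uv2 QP; lra.
Qed.

Lemma normr_dotv_le u v : `|dotv u v| <= enorm u * enorm v.
Proof.
rewrite /enorm -sqrtrM ?dotvv_ge0 // -sqrtr_sqr ler_sqrt ?dotv_sqr_le //.
by rewrite mulr_ge0 ?dotvv_ge0.
Qed.

Lemma enorm_const_mx (a : R) : enorm (const_mx a : 'rV[R]_d) = `|a| * Num.sqrt d%:R.
Proof.
rewrite /enorm /dotv (eq_bigr (fun=> a ^+ 2)) => [|i _]; last by rewrite !mxE expr2.
by rewrite sumr_const card_ord -[a ^+ 2 *+ _]mulr_natr sqrtrM ?sqr_ge0 // sqrtr_sqr.
Qed.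

Lemma exists_enorm_gt (r : R) : (0 < d)%N -> exists u, r < enorm u.
Proof.
move=> d_gt0; exists (const_mx (`|r| + 1)); rewrite enorm_const_mx.
have sqrt_d : 1 <= Num.sqrt d%:R :> R by rewrite -{1}sqrtr1 ler_sqrt // ler1n.
have r1 : 0 <= `|r| + 1 by rewrite addr_ge0 ?normr_ge0.
rewrite (ger0_norm r1).
by have := ler_norm r; have := normr_ge0 r; nra.
Qed.

Lemma convex_fun_line {g : 'rV[R]_d -> R} u v :
  convex_fun g -> convexR (fun t => g (u + t *: v)).
Proof.
move=> g_cvx a b t t0 t1.
have -> : u + (t * a + (1 - t) * b) *: v = t *: (u + a *: v) + (1 - t) *: (u + b *: v).
  by apply/rowP => i; rewrite !mxE; ring.
exact: g_cvx.
Qed.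

Lemma subdiff_gap_le {g : 'rV[R]_d -> R} {x s} u :
  subdiff g x s -> g x - g u <= enorm s * (enorm x + enorm u).
Proof.
move=> /(_ u); rewrite dotvBr => sub.
have := normr_dotv_le s u; have := normr_dotv_le s x.
have := ler_norm (dotv s x); have := ler_norm (- dotv s u); rewrite normrN mulrDr.
lra.
Qed.

End Euclidean.

Theorem proposition1 (R : realType) (d : nat) (g : 'rV[R]_d -> R)
  (hd : (0 < d)%N)
  (hconv : convex_fun g)
  (Rad : R) (hRad : 0 < Rad)
  (hbdd : forall x : 'rV[R]_d, g x <= 0 -> enorm x <= Rad)
  (xi : R) (y : 'rV[R]_d) (hxi : 0 < xi) (hslater : g y <= - xi) :
  forall c : R, 0 < c -> c < 1 ->
    let eps := c * xi in
    let sigma := (1 - c) * (xi / (2 * Rad)) in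
    (exists x : 'rV[R]_d, g x = - eps) /\
    (forall (x s : 'rV[R]_d), g x = - eps -> subdiff g x s -> sigma <= enorm s).
Proof.
move=> c c0 c1 eps sigma.
have eps_gt0 : 0 < eps by rewrite mulr_gt0.
have eps_lt : eps < xi by rewrite gtr_pMl.
split.
  have [z Rz] := exists_enorm_gt Rad hd.
  have gz : 0 < g z by rewrite ltNge; apply: contraTN Rz => /hbdd; rewrite -leNgt.
  pose phi t := g (y + t *: (z - y)).
  have phi0 : phi 0 < - eps by rewrite /phi scale0r addr0; lra.
  have phi1 : - eps < phi 1 by rewrite /phi scale1r addrC subrK; lra.
  have [t phi_t] := convexR_ivt (convex_fun_line y (z - y) hconv) phi0 phi1.
  by exists (y + t *: (z - y)).
move=> x s gx sx.
have x_le : enorm x <= Rad by apply: hbdd; lra.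
have y_le : enorm y <= Rad by apply: hbdd; lra.
have gap := subdiff_gap_le y sx.
have s_ge0 : 0 <= enorm s by rewrite /enorm sqrtr_ge0.
have bound : enorm s * (enorm x + enorm y) <= enorm s * (2 * Rad).
  by rewrite ler_wpM2l //; lra.
rewrite /sigma mulrA ler_pdivrMr; last lra.
have : (1 - c) * xi = xi - eps by rewrite /eps; ring.
by move: gap bound; rewrite gx; lra.
Qed.
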